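(* Let $T=(V,E,r)$ be a finite rooted tree embedded in $\mathbb R^n$ as described in the context, and let $i,j,k$ be three adjacent nodes with $i<j<k$ (i.e. $i$ is the parent of $j$ and $j$ is the parent of $k$). Assume that Assumption A1 holds: for all $x,x'\in[x_i,x_j]$ and $y,y'\in[x_j,x_k]$, $\ell([x,y])\le\ell([x',y'])\Rightarrow\|x-y\|\le\|x'-y'\|$. Then $$\langle\mu_{[x_i,x_j]},\mu_{[x_j,x_k]}\rangle_{W^\ast}=o\Big(\|\mu_{[x_i,x_j]}\|^2_{W^\ast}+\|\mu_{[x_j,x_k]}\|^2_{W^\ast}\Big)$$ as $\sigma_x,\sigma_t\to0$ with $\sigma_x\asymp\sigma_t$, where $\sigma_x\asymp\sigma_t$ means there exist constants $k_1,k_2>0$ with $k_1\sigma_x\le\sigma_t\le k_2\sigma_x$.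
   Context: Rooted tree and embedding. $T=(V,E,r)$ is a finite rooted tree with root $r$; $i<j$ means $i$ is the parent of $j$. The tree is embedded in $\mathbb R^n$ via an injective map $i\mapsto x_i\in\mathbb R^n$ and a map sending each edge $(i,j)$ to a smooth curve segment $[x_i,x_j]$ joining $x_i$ and $x_j$ (not necessarily a line segment); embeddings of two edges intersect only if the edges share a node, and only at the image of that node. The embedding of the path from $r$ to any node is a smooth, regular curve of finite length, oriented from the root to the end node; $[x,y]$ denotes the sub-arc between two points on a common embedded root-to-node path. $\ell(\gamma)$ is arc length, $\vec t(x)\in\mathbb S^{n-1}$ the unit oriented tangent vector at $x$. For $\sigma_x,\sigma_t>0$ and smooth oriented curves $X,Y$ of finite length, $$\langle\mu_X,\mu_Y\rangle_{W^\ast}=\iint_{X\times Y} e^{-\|x-y\|^2/\sigma_x^2}\,e^{-\|\vec t(x)-\vec t(y)\|^2/\sigma_t^2}\,d\ell(x)\,d\ell(y),\qquad \|\mu_X\|^2_{W^\ast}=\langle\mu_X,\mu_X\rangle_{W^\ast}$$ (the oriented-varifold inner product induced by the Gaussian tensor-product kernel with parameters $\sigma_x,\sigma_t$). *)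

From HB Require Import structures.
From mathcomp Require Import all_boot all_order all_algebra.
From mathcomp Require Import all_classical all_reals all_analysis.
Set Implicit Arguments. Unset Strict Implicit. Unset Printing Implicit Defensive.
Import Order.TTheory GRing.Theory Num.Theory.
Import numFieldNormedType.Exports.
Local Open Scope classical_set_scope.
Local Open Scope ring_scope.

Section Defs.
Variables (R : realType) (n : nat).

Definition enorm (v : 'rV[R]_n) : R := Num.sqrt (\sum_(i < n) v ord0 i ^+ 2).

Definition smooth_curve (g : R -> 'rV[R]_n) : Prop :=
  forall (k : nat) (t : R), derivable (iter k (@derive1 R _) g) t 1.

Definition arclen (g : R -> 'rV[R]_n) (s t : R) : R :=
  Rintegral (@lebesgue_measure R) `[s, t] (fun u => enorm (derive1 g u)).

Definition utangent (g : R -> 'rV[R]_n) (s : R) : 'rV[R]_n :=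
  (enorm (derive1 g s))^-1 *: derive1 g s.

Definition vkernel (sx st : R) (x y u v : 'rV[R]_n) : R :=
  expR (- (enorm (x - y) ^+ 2 / sx ^+ 2)) * expR (- (enorm (u - v) ^+ 2 / st ^+ 2)).

(* Oriented-varifold inner product <mu_X, mu_Y>_{W*} of X = g([a,b]) and
   Y = g([c,d]), integrating against arc length d l = |g'(s)| ds. *)
Definition varifold_ip (sx st : R) (g : R -> 'rV[R]_n) (a b c d : R) : R :=
  Rintegral (@lebesgue_measure R) `[a, b] (fun s =>
    Rintegral (@lebesgue_measure R) `[c, d] (fun t =>
      vkernel sx st (g s) (g t) (utangent g s) (utangent g t)
      * enorm (derive1 g s) * enorm (derive1 g t))).

End Defs.

(* Work in the curve parameter.  On [a, c] the speed |g'| lies between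
   constants m > 0 and K, and g and its unit tangent are Lipschitz.  Hence for
   |s - t| <= sx both Gaussian factors of the kernel are bounded below (this is
   where st >= k1 sx enters), so the squared norm of the first edge is at least
   Q sx.  For the cross term, |g s - g t|^2 >= kap (t - s)^2 whenever s <= b <= t:
   near the junction by regularity of g at b, away from it because A1 compares
   the pair with one fixed short pair (b, t0), whose chord is positive by
   injectivity.  The cross integrand is then at most K^2 exp(-kap (t-s)^2/sx^2).
   Splitting at t - s = eta, the band t - s < eta contributes at most K^2 eta^2
   and the rest at most a constant times exp(-kap eta^2/sx^2); with eta^2 a
   small multiple of sx the first is a small multiple of sx and the second is
   exponentially small in 1/sx. *)

From HB Require Import structures.
From mathcomp Require Import all_boot all_order all_algebra.
From mathcomp Require Import all_classical all_reals all_analysis.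
From mathcomp Require Import ring lra measurable_realfun.
Import Order.TTheory GRing.Theory Num.Theory.
Import numFieldNormedType.Exports.
Local Open Scope ring_scope.

Set Implicit Arguments.
Unset Strict Implicit.
Unset Printing Implicit Defensive.

Section interval_integral_bounds.
Context {R : realType}.
Local Notation mu := (@lebesgue_measure R).
Local Open Scope classical_set_scope.

(* No measurability is needed: the integral of a nonnegative function is the
   supremum of the integrals of the simple functions below it. *)
Lemma ge0_le_integral_sup (D : set R) (f h : R -> R) :
  (forall x, D x -> 0 <= f x <= h x) ->
  (\int[mu]_(x in D) (f x)%:E <= \int[mu]_(x in D) (h x)%:E)%E.
Proof.
move=> fh.
rewrite !ge0_integralE; last 2 first.
- by move=> x /fh /andP[f0 fh']; rewrite lee_fin (le_trans f0).
- by move=> x /fh /andP[f0 _]; rewrite lee_fin.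
apply: ereal_sup_le => _ [k kf <-]; exists k => //= x.
rewrite (le_trans (kf x))// /patch; case: ifP => // /set_mem /fh /andP[_].
by rewrite lee_fin.
Qed.

(* Stated for the measure structure, the form produced by [integral_indic]. *)
Lemma lebesgue_measure_itv_cc (u v : R) : u <= v ->
  (mu : {measure set (measurableTypeR R) -> \bar R}) `[u, v] = (v - u)%:E.
Proof.
move=> uv; have /= := lebesgue_measure_itv (Interval (BLeft u) (BRight v)).
move=> ->; rewrite lte_fin -EFinD.
by case: ltgtP uv => // ->; rewrite subrr.
Qed.

Lemma integral_itv_step (p q u v al be : R) : p <= q -> u <= v ->
  0 <= al -> 0 <= be ->
  (\int[mu]_(x in `[p, q]) (al + be * \1_(`[u, v]) x)%:E <=
     (al * (q - p) + be * (v - u))%:E)%E.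
Proof.
move=> pq uv al0 be0.
have mind : measurable_fun `[p, q] (\1_(`[u, v]) : R -> R).
  exact: measurable_indic.
under eq_integral do rewrite EFinD EFinM.
rewrite ge0_integralD//; last 2 first.
- by move=> x _; rewrite lee_fin mulr_ge0.
- by apply/measurable_EFinP; apply: measurable_funM.
rewrite integral_cst// ge0_integralZl_EFin//; last exact/measurable_EFinP.
rewrite integral_indic// lebesgue_measure_itv_cc// -EFinM EFinD leeD// EFinM.
rewrite lee_wpmul2l ?lee_fin// -lebesgue_measure_itv_cc//.
by rewrite le_measure ?inE//; exact: measurableI.
Qed.

Lemma integral_itv_fin_num (p q M : R) (f : R -> R) : p <= q ->
  (forall x, `[p, q] x -> 0 <= f x <= M) ->
  (\int[mu]_(x in `[p, q]) (f x)%:E)%E \is a fin_num.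
Proof.
move=> pq fM; have /andP[f0 fMp] : 0 <= f p <= M.
  by apply: fM; rewrite /= in_itv/= lexx pq.
have fM' x : `[p, q] x -> 0 <= f x <= M + 0 * \1_(`[p, q]) x.
  by rewrite mul0r addr0; exact: fM.
rewrite ge0_fin_numE; last by apply: integral_ge0 => x /fM /andP[]; rewrite lee_fin.
apply: le_lt_trans (ge0_le_integral_sup fM') _.
by apply: le_lt_trans (integral_itv_step pq pq (le_trans f0 fMp) (lexx 0)) _; rewrite ltry.
Qed.

Lemma Rintegral_itv_le_step (p q u v al be : R) (f : R -> R) :
  p <= q -> u <= v -> 0 <= al -> 0 <= be ->
  (forall x, `[p, q] x -> 0 <= f x <= al + be * \1_(`[u, v]) x) ->
  Rintegral mu `[p, q] f <= al * (q - p) + be * (v - u).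
Proof.
move=> pq uv al0 be0 fb.
have fle := le_trans (ge0_le_integral_sup fb) (integral_itv_step pq uv al0 be0).
have f0 : (0 <= \int[mu]_(x in `[p, q]) (f x)%:E)%E.
  by apply: integral_ge0 => x /fb /andP[]; rewrite lee_fin.
rewrite /Rintegral; apply: (fine_le _ _ fle) => //.
by rewrite ge0_fin_numE// (le_lt_trans fle) ?ltry.
Qed.

Lemma Rintegral_itv_le (p q M : R) (f : R -> R) : p <= q ->
  (forall x, `[p, q] x -> 0 <= f x <= M) ->
  Rintegral mu `[p, q] f <= M * (q - p).
Proof.
move=> pq fM; have /andP[f0 fMp] : 0 <= f p <= M.
  by apply: fM; rewrite /= in_itv/= lexx pq.
rewrite -[M * _]addr0 -(mul0r (q - p)).
apply: (Rintegral_itv_le_step pq pq (le_trans f0 fMp) (lexx 0)) => x /fM.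
by rewrite mul0r addr0.
Qed.

Lemma Rintegral_itv_ge (p q u v be M : R) (f : R -> R) :
  p <= u -> u <= v -> v <= q -> 0 <= be ->
  (forall x, `[p, q] x -> 0 <= f x <= M) ->
  (forall x, `[u, v] x -> be <= f x) ->
  be * (v - u) <= Rintegral mu `[p, q] f.
Proof.
move=> pu uv vq be0 fM fbe.
have pq : p <= q by rewrite (le_trans pu) ?(le_trans uv).
have step x : `[p, q] x -> 0 <= be * \1_(`[u, v]) x <= f x.
  move=> xpq; rewrite mulr_ge0 ?indicE//=.
  have /andP[f0 _] := fM x xpq.
  by case: (boolP (x \in `[u, v])) => [/set_mem/fbe|_]; rewrite ?mulr1 ?mulr0.
have := ge0_le_integral_sup step.
under eq_integral do rewrite EFinM.
rewrite ge0_integralZl_EFin//; last by apply/measurable_EFinP; exact: measurable_indic.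
rewrite integral_indic// setIidl; last by apply: subset_itv; rewrite bnd_simp.
rewrite lebesgue_measure_itv_cc// -EFinM.
by rewrite /Rintegral -lee_fin fineK// (integral_itv_fin_num pq fM).
Qed.

End interval_integral_bounds.

Lemma ler_sqr_norm {R : realDomainType} (x y : R) : `|x| <= y -> x ^+ 2 <= y ^+ 2.
Proof.
by move=> xy; rewrite -real_normK ?num_real// ler_sqr// nnegrE (le_trans _ xy).
Qed.

Section euclidean_norm.
Context {R : realType} {n : nat}.
Implicit Types v w : 'rV[R]_n.

Lemma coord_sub v w i : (v - w) ord0 i = v ord0 i - w ord0 i.
Proof. by rewrite !mxE. Qed.

Lemma enorm_ge0 v : 0 <= enorm v.
Proof. exact: sqrtr_ge0. Qed.

Lemma sqr_enorm v : enorm v ^+ 2 = \sum_(i < n) v ord0 i ^+ 2.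
Proof. by rewrite sqr_sqrtr// sumr_ge0// => i _; exact: sqr_ge0. Qed.

Lemma coord_le_enorm v i : `|v ord0 i| <= enorm v.
Proof.
rewrite -sqrtr_sqr ler_sqrt ?sumr_ge0// => [|j _]; last exact: sqr_ge0.
by rewrite (bigD1 i)//= lerDl sumr_ge0// => j _; exact: sqr_ge0.
Qed.

Lemma enorm_gt0 v : v != 0 -> 0 < enorm v.
Proof.
apply: contraNT; rewrite -leNgt => v0; apply/eqP/matrixP => i j.
rewrite (ord1 i) mxE; apply/normr0_eq0/eqP.
by rewrite eq_le normr_ge0 andbT (le_trans (coord_le_enorm v j)).
Qed.

Lemma sqr_enorm_le v C : (forall i, `|v ord0 i| <= C) -> enorm v ^+ 2 <= n%:R * C ^+ 2.
Proof.
move=> vC; rewrite sqr_enorm (le_trans (ler_sum _ (fun i _ => ler_sqr_norm (vC i))))//.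
by rewrite sumr_const card_ord mulr_natl.
Qed.

Lemma sqr_enorm_dist_le v w C :
  (forall i, `|v ord0 i ^+ 2 - w ord0 i ^+ 2| <= C) ->
  `|enorm v ^+ 2 - enorm w ^+ 2| <= n%:R * C.
Proof.
move=> vwC; rewrite !sqr_enorm -sumrB (le_trans (ler_norm_sum _ _ _))//.
by rewrite (le_trans (ler_sum _ (fun i _ => vwC i)))// sumr_const card_ord mulr_natl.
Qed.

End euclidean_norm.

Section real_derivable.
Context {R : realType}.

Lemma derivable_continuous_real (h : R -> R) :
  (forall t, derivable h t 1) -> continuous h.
Proof. by move=> dh t; apply/differentiable_continuous/derivable1_diffP. Qed.

Lemma is_derive_derive1 (h : R -> R) t : derivable h t 1 -> is_derive t 1 h (derive1 h t).
Proof. by move=> dh; rewrite derive1E; exact: derivableP. Qed.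

Lemma MVT_itv (h : R -> R) (p q : R) : (forall x, derivable h x 1) ->
  forall s t, p <= s <= q -> p <= t <= q ->
  exists2 x, p <= x <= q & h s - h t = derive1 h x * (s - t).
Proof.
move=> dh s t spq tpq.
wlog st : s t spq tpq / s <= t.
  move=> wl; have [st|/ltW ts] := leP s t; first exact: wl.
  have [x xpq E] := wl t s tpq spq ts.
  by exists x => //; rewrite -opprB E -mulrN opprB.
have [x /[!in_itv]/= /andP[sx xt] E] := MVT_segment st
  (fun x _ => is_derive_derive1 (dh x))
  (continuous_subspaceT (derivable_continuous_real dh)).
exists x; last by rewrite -opprB E -mulrN opprB.
by case/andP: spq => ps _; case/andP: tpq => _ tq; rewrite (le_trans ps sx) (le_trans xt tq).
Qed.

Lemma dist_le_of_derive1_le (h : R -> R) (p q B : R) : (forall x, derivable h x 1) ->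
  (forall x, p <= x <= q -> `|derive1 h x| <= B) ->
  forall s t, p <= s <= q -> p <= t <= q -> `|h s - h t| <= B * `|s - t|.
Proof.
move=> dh hB s t spq tpq; have [x xpq ->] := MVT_itv dh spq tpq.
by rewrite normrM ler_wpM2r// hB.
Qed.

Lemma dist_ge_of_derive1_ge (h : R -> R) (p q B : R) : (forall x, derivable h x 1) ->
  (forall x, p <= x <= q -> B <= `|derive1 h x|) ->
  forall s t, p <= s <= q -> p <= t <= q -> B * `|s - t| <= `|h s - h t|.
Proof.
move=> dh hB s t spq tpq; have [x xpq ->] := MVT_itv dh spq tpq.
by rewrite normrM ler_wpM2r// hB.
Qed.

Context {n : nat}.
Implicit Types f : R -> 'rV[R]_n.

Lemma derivable_coord f i t :
  derivable f t 1 -> derivable (fun x => f x ord0 i) t 1.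
Proof. by move=> /derivable_mxP; apply. Qed.

Lemma derive1_coord f i t : derivable f t 1 ->
  derive1 (fun x => f x ord0 i) t = derive1 f t ord0 i.
Proof. by move=> df; rewrite !derive1E (derive_mx df) mxE. Qed.

Lemma continuous_enorm_derivable f :
  (forall t, derivable f t 1) -> continuous (fun t => enorm (f t)).
Proof.
move=> df t; apply: (@continuous_comp _ _ _ _ (@Num.sqrt R)); last first.
  exact: sqrt_continuous.
apply: continuous_big => [|i _]; first exact: add_continuous.
by move=> x; apply: continuousM; apply: derivable_continuous_real => y;
  exact: derivable_coord.
Qed.

Lemma enorm_bounded_itv f (a c : R) :
  a <= c -> (forall t, derivable f t 1) ->
  exists K, forall t, a <= t <= c -> enorm (f t) <= K.
Proof.
move=> ac df; have /continuous_subspaceT f_cont := continuous_enorm_derivable df.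
have [t1 _ max1] := EVT_max ac (f_cont _).
by exists (enorm (f t1)) => t tac; rewrite max1 ?in_itv.
Qed.

Lemma coord_dist_le f (p q K : R) i : (forall t, derivable f t 1) ->
  (forall t, p <= t <= q -> enorm (derive1 f t) <= K) ->
  forall s t, p <= s <= q -> p <= t <= q ->
  `|f s ord0 i - f t ord0 i| <= K * `|s - t|.
Proof.
move=> df fK; apply: dist_le_of_derive1_le => [x|x xpq].
  exact: derivable_coord.
by rewrite derive1_coord// (le_trans (coord_le_enorm _ i)) ?fK.
Qed.

Lemma sqr_enorm_sub_le f (p q K : R) : (forall t, derivable f t 1) ->
  (forall t, p <= t <= q -> enorm (derive1 f t) <= K) ->
  forall s t, p <= s <= q -> p <= t <= q ->
  enorm (f s - f t) ^+ 2 <= n%:R * K ^+ 2 * (s - t) ^+ 2.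
Proof.
move=> df fK s t spq tpq.
rewrite -mulrA -(real_normK (num_real (s - t))) -exprMn.
by apply: sqr_enorm_le => i; rewrite coord_sub; exact: (coord_dist_le i df fK spq tpq).
Qed.

End real_derivable.

Section quotient_estimates.
Context {R : realFieldType}.
Implicit Types x y m K P Q : R.

Lemma dist_sqr_le x y K : `|x| <= K -> `|y| <= K ->
  `|x ^+ 2 - y ^+ 2| <= 2 * K * `|x - y|.
Proof.
move=> xK yK; rewrite subr_sqr normrM [X in _ <= X]mulrC ler_wpM2l//.
by rewrite mulr2n mulrDl mul1r (le_trans (ler_normD _ _)) ?lerD.
Qed.

Lemma dist_le_dist_sqr x y m : 0 < m -> m <= x -> m <= y ->
  `|x - y| <= `|x ^+ 2 - y ^+ 2| / (2 * m).
Proof.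
move=> m0 mx my; rewrite ler_pdivlMr ?mulr_gt0// subr_sqr normrM ler_wpM2l//.
by rewrite ger0_norm ?addr_ge0 ?(le_trans (ltW m0))// mulr2n mulrDl mul1r lerD.
Qed.

Lemma dist_div_le x y P Q m K : 0 < m -> m <= P -> m <= Q -> `|y| <= K ->
  `|x / P - y / Q| <= `|x - y| / m + K * `|P - Q| / m ^+ 2.
Proof.
move=> m0 mP mQ yK.
have P0 : 0 < P := lt_le_trans m0 mP.
have Q0 : 0 < Q := lt_le_trans m0 mQ.
have -> : x / P - y / Q = (x - y) / P + y * (Q - P) / (P * Q).
  by field; rewrite !gt_eqF.
rewrite (le_trans (ler_normD _ _))// lerD//.
  by rewrite normrM normfV (gtr0_norm P0) ler_wpM2l// lef_pV2 ?posrE.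
have mPQ : m ^+ 2 <= P * Q by rewrite expr2 ler_pM// ltW.
rewrite !normrM normfV (gtr0_norm (mulr_gt0 P0 Q0)) distrC.
rewrite ler_pM ?mulr_ge0 ?invr_ge0 ?ler_wpM2r//; first exact: ltW (mulr_gt0 P0 Q0).
by rewrite lef_pV2 ?posrE ?exprn_gt0 ?mulr_gt0.
Qed.

End quotient_estimates.

Lemma utangent_coord {R : realType} {n : nat} (f : R -> 'rV[R]_n) s i :
  utangent f s ord0 i = derive1 f s ord0 i / enorm (derive1 f s).
Proof. by rewrite /utangent; move: (derive1 f s) => v; rewrite mxE mulrC. Qed.

Section regular_curve.
Context {R : realType} {n : nat} (g : R -> 'rV[R]_n) (a c : R).
Hypothesis ac : a <= c.
Hypothesis g_smooth : smooth_curve g.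
Hypothesis g_regular : forall s, a <= s <= c -> derive1 g s != 0.

Local Notation g' := (derive1 g).
Local Notation g'' := (derive1 (derive1 g)).

Lemma derivable_curve t : derivable g t 1. Proof. exact: (@g_smooth 0%N t). Qed.
Lemma derivable_curve' t : derivable g' t 1. Proof. exact: (@g_smooth 1%N t). Qed.
Lemma derivable_curve'' t : derivable g'' t 1. Proof. exact: (@g_smooth 2%N t). Qed.

Lemma speed_bounds : exists m K, 0 < m /\
  forall t, a <= t <= c -> m <= enorm (g' t) <= K.
Proof.
have /continuous_subspaceT speed_cont := continuous_enorm_derivable derivable_curve'.
have [t1 /[!in_itv]/= t1ac max1] := EVT_max ac (speed_cont _).
have [t0 /[!in_itv]/= t0ac min0] := EVT_min ac (speed_cont _).
exists (enorm (g' t0)), (enorm (g' t1)); split; first exact/enorm_gt0/g_regular.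
by move=> t tac; apply/andP; split; [apply: min0|apply: max1]; rewrite in_itv.
Qed.

Lemma curve_lipschitz : exists2 L, 0 <= L & forall s t, a <= s <= c -> a <= t <= c ->
  enorm (g s - g t) ^+ 2 <= L * (s - t) ^+ 2.
Proof.
have [K speed] := enorm_bounded_itv ac derivable_curve'.
exists (n%:R * K ^+ 2); first by rewrite mulr_ge0 ?sqr_ge0.
exact: sqr_enorm_sub_le derivable_curve speed.
Qed.

Section bounded_derivatives.
Variables (m K K2 : R).
Hypothesis m_gt0 : 0 < m.
Hypothesis speed : forall t, a <= t <= c -> m <= enorm (g' t) <= K.
Hypothesis acceleration : forall t, a <= t <= c -> enorm (g'' t) <= K2.

Lemma speed_dist_le s t : a <= s <= c -> a <= t <= c ->
  `|enorm (g' s) - enorm (g' t)| <= n%:R * K * K2 / m * `|s - t|.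
Proof.
move=> sac tac; have /andP[ms sK] := speed sac; have /andP[mt tK] := speed tac.
have K0 : 0 <= K := le_trans (ltW m_gt0) (le_trans ms sK).
have coord_sqr i :
    `|g' s ord0 i ^+ 2 - g' t ord0 i ^+ 2| <= 2 * K * (K2 * `|s - t|).
  apply: le_trans (dist_sqr_le _ _) _.
  - exact: le_trans (coord_le_enorm _ i) sK.
  - exact: le_trans (coord_le_enorm _ i) tK.
  by rewrite ler_wpM2l ?mulr_ge0//;
    exact: (coord_dist_le i derivable_curve' acceleration sac tac).
apply: le_trans (dist_le_dist_sqr m_gt0 ms mt) _.
rewrite ler_pdivrMr; last by rewrite mulr_gt0.
apply: le_trans (sqr_enorm_dist_le coord_sqr) _.
by rewrite le_eqVlt; apply/predU1P; left; field; rewrite gt_eqF.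
Qed.

Lemma utangent_coord_dist_le s t i : a <= s <= c -> a <= t <= c ->
  `|(utangent g s - utangent g t) ord0 i|
    <= (K2 / m + n%:R * K ^+ 2 * K2 / m ^+ 3) * `|s - t|.
Proof.
move=> sac tac; have /andP[ms sK] := speed sac; have /andP[mt tK] := speed tac.
rewrite coord_sub !utangent_coord.
apply: le_trans (dist_div_le _ m_gt0 ms mt (le_trans (coord_le_enorm _ i) tK)) _.
have K0 : 0 <= K := le_trans (ltW m_gt0) (le_trans ms sK).
have coord_le := coord_dist_le i derivable_curve' acceleration sac tac.
have speed_le := ler_wpM2l K0 (speed_dist_le sac tac).
apply: le_trans (lerD (ler_wpM2r _ coord_le) (ler_wpM2r _ speed_le)) _.
- by rewrite invr_ge0 ltW.
- by rewrite invr_ge0 exprn_ge0 ?ltW.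
by rewrite le_eqVlt; apply/predU1P; left; field; rewrite gt_eqF.
Qed.

End bounded_derivatives.

Lemma utangent_lipschitz : exists2 L, 0 <= L & forall s t, a <= s <= c -> a <= t <= c ->
  enorm (utangent g s - utangent g t) ^+ 2 <= L * (s - t) ^+ 2.
Proof.
have [m [K [m0 speed]]] := speed_bounds.
have [K2 acceleration] := enorm_bounded_itv ac derivable_curve''.
pose L := K2 / m + n%:R * K ^+ 2 * K2 / m ^+ 3.
exists (n%:R * L ^+ 2) => [|s t sac tac]; first by rewrite mulr_ge0 ?sqr_ge0.
rewrite -mulrA -(real_normK (num_real (s - t))) -exprMn.
apply: sqr_enorm_le => i.
exact: (utangent_coord_dist_le m0 speed acceleration).
Qed.

End regular_curve.

Lemma arclen_bounds {R : realType} {n : nat} (f : R -> 'rV[R]_n) (s t m K : R) :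
  0 <= m -> s <= t -> (forall x, s <= x <= t -> m <= enorm (derive1 f x) <= K) ->
  m * (t - s) <= arclen f s t <= K * (t - s).
Proof.
move=> m0 st speed; have speed' x : `[s, t]%classic x -> 0 <= enorm (derive1 f x) <= K.
  by rewrite /= in_itv/= => /speed /andP[mx ->]; rewrite (le_trans m0).
apply/andP; split; last exact: Rintegral_itv_le.
apply: Rintegral_itv_ge speed' _ => //.
by move=> x; rewrite /= in_itv/= => /speed /andP[].
Qed.

Lemma regular_point_sqr_enorm_sub_ge {R : realType} {n : nat} (f : R -> 'rV[R]_n) b :
  (forall t, derivable f t 1) -> (forall t, derivable (derive1 f) t 1) ->
  derive1 f b != 0 ->
  exists d kap, [/\ 0 < d, 0 < kap & forall s t,
    b - d <= s <= b + d -> b - d <= t <= b + d ->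
    kap * (s - t) ^+ 2 <= enorm (f s - f t) ^+ 2].
Proof.
move=> df df' f'b.
have [i f'bi] : exists i, derive1 f b ord0 i != 0.
  apply/existsP; apply: contraNT f'b => /existsPn f'b0.
  by apply/eqP/matrixP => i j; rewrite (ord1 i) mxE; apply/eqP/negPn/f'b0.
pose al := `|derive1 f b ord0 i|.
have al0 : 0 < al by rewrite normr_gt0.
have f'i_cont := derivable_continuous_real (fun t => derivable_coord (i := i) (df' t)).
have al20 : 0 < al / 2 by rewrite divr_gt0.
have /cvgrPdist_lt /(_ _ al20) /nbhs_ballP[d /= d0 near_b] := f'i_cont b.
exists (d / 2), ((al / 2) ^+ 2); split; rewrite ?divr_gt0 ?exprn_gt0 //.
move=> s t sb tb.
have coord_ge (x : R) : b - d / 2 <= x <= b + d / 2 ->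
    al / 2 <= `|derive1 (fun y => f y ord0 i) x|.
  move=> xb; rewrite (derive1_coord i (df x)).
  have : ball b d x.
    by case/andP: xb => ? ?; rewrite /ball/= ltr_distlC; apply/andP; split; lra.
  move=> /near_b/= bx; have := lerB_dist (derive1 f b ord0 i) (derive1 f x ord0 i).
  rewrite -/al; lra.
apply: (@le_trans _ _ (`|f s ord0 i - f t ord0 i| ^+ 2)).
  rewrite -[(s - t) ^+ 2]real_normK ?num_real// -exprMn ler_sqr ?nnegrE//.
    exact: (dist_ge_of_derive1_ge (fun x => derivable_coord (i := i) (df x)) coord_ge sb tb).
  exact: mulr_ge0 (ltW al20) (normr_ge0 _).
by rewrite -(coord_sub (f s)) ler_sqr_norm// normr_id coord_le_enorm.
Qed.

Section curve_junction.
Context {R : realType} {n : nat} (g : R -> 'rV[R]_n) (a b c : R).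
Hypothesis ab : a < b.
Hypothesis bc : b < c.
Hypothesis g_smooth : smooth_curve g.
Hypothesis g_regular : forall s, a <= s <= c -> derive1 g s != 0.
Hypothesis g_inj : forall s t, a <= s <= c -> a <= t <= c -> g s = g t -> s = t.
Hypothesis A1 : forall s s' t t', a <= s <= b -> a <= s' <= b ->
  b <= t <= c -> b <= t' <= c ->
  arclen g s t <= arclen g s' t' -> enorm (g s - g t) <= enorm (g s' - g t').

Let ac : a <= c. Proof. by rewrite ltW ?(lt_trans ab bc). Qed.

(* Every pair with [t - s >= d] has arc length at least that of the pair
   [(b, t0)], so A1 bounds its chord below by the positive chord [D]. *)
Lemma separated_sqr_enorm_sub_ge (d : R) : 0 < d -> exists2 kap, 0 < kap &
  forall s t, a <= s <= b -> b <= t <= c -> d <= t - s ->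
  kap * (s - t) ^+ 2 <= enorm (g s - g t) ^+ 2.
Proof.
move=> d0; have [m [K [m0 speed]]] := speed_bounds ac g_smooth g_regular.
have speed_sub p q : a <= p -> q <= c -> forall x, p <= x <= q ->
    m <= enorm (derive1 g x) <= K.
  by move=> ap qc x /andP[px xq]; apply: speed; rewrite (le_trans ap px) (le_trans xq qc).
have bac : a <= b <= c by rewrite !ltW.
have /andP[mb bK] := speed b bac.
have K0 : 0 < K := lt_le_trans m0 (le_trans mb bK).
pose t0 := b + Num.min (m * d / K) (c - b).
have bt0 : b < t0 by rewrite ltrDl lt_min !divr_gt0 ?mulr_gt0 ?subr_gt0.
have t0c : t0 <= c by rewrite -lerBrDl ge_min lexx orbT.
have arc_t0 : arclen g b t0 <= m * d.
  have /andP[_ arc_le] := arclen_bounds (ltW m0) (ltW bt0) (speed_sub _ _ (ltW ab) t0c).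
  apply: le_trans arc_le _; rewrite [K * _]mulrC -ler_pdivlMr// /t0 addrC addKr.
  by rewrite ge_min lexx.
pose D := enorm (g b - g t0).
have D0 : 0 < D.
  have t0ac : a <= t0 <= c by rewrite t0c (le_trans (ltW ab) (ltW bt0)).
  apply: enorm_gt0; rewrite subr_eq0; apply/eqP => /(g_inj bac t0ac) bt0E.
  by move: bt0; rewrite bt0E ltxx.
exists ((D / (c - a)) ^+ 2) => [|s t /andP[sa sb] /andP[bt tc] dts].
  by rewrite exprn_gt0// divr_gt0// subr_gt0 (lt_trans ab).
have DD : D <= enorm (g s - g t).
  apply: A1; rewrite ?sa ?sb ?bt ?tc ?t0c ?(ltW ab) ?(ltW bt0) ?lexx//.
  apply: le_trans arc_t0 _; apply: le_trans (ler_wpM2l (ltW m0) dts) _.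
  by have /andP[] := arclen_bounds (ltW m0) (le_trans sb bt) (speed_sub _ _ sa tc).
have ts_ca : `|s - t| <= c - a by rewrite distrC ger0_norm ?subr_ge0 ?(le_trans sb bt)// lerB.
have ca0 : 0 < c - a by rewrite subr_gt0 (lt_trans ab).
rewrite -exprMn ler_sqr_norm// normrM (ger0_norm (divr_ge0 (ltW D0) (ltW ca0))).
by rewrite (le_trans _ DD)// mulrAC ler_pdivrMr// ler_wpM2l// ltW.
Qed.

Lemma junction_sqr_enorm_sub_ge : exists2 kap, 0 < kap &
  forall s t, a <= s <= b -> b <= t <= c ->
  kap * (s - t) ^+ 2 <= enorm (g s - g t) ^+ 2.
Proof.
have bac : a <= b <= c by rewrite !ltW.
have [d [kap1 [d0 kap10 near_b]]] := regular_point_sqr_enorm_sub_ge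
  (derivable_curve g_smooth) (derivable_curve' g_smooth) (g_regular bac).
have [kap2 kap20 far] := separated_sqr_enorm_sub_ge d0.
exists (Num.min kap1 kap2) => [|s t sab tbc]; first by rewrite lt_min kap10.
move: (sab) (tbc) => /andP[sa sb] /andP[bt tc].
have [/andP[bs tb]|] := boolP ((b - d <= s) && (t <= b + d)).
  apply: le_trans (near_b s t _ _); first by rewrite ler_wpM2r ?sqr_ge0// ge_min lexx.
    by rewrite bs (le_trans sb)// lerDl ltW.
  by rewrite tb (le_trans _ bt)// gerDl oppr_le0 ltW.
rewrite negb_and -!ltNge => far_sep.
apply: le_trans (far s t sab tbc _); first by rewrite ler_wpM2r ?sqr_ge0// ge_min lexx orbT.
by case/orP: far_sep => ?; lra.
Qed.

End curve_junction.

Lemma expRN_le1 {R : realType} (x : R) : 0 <= x -> expR (- x) <= 1.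
Proof. by move=> x0; rewrite expR_le1 oppr_le0. Qed.

Section varifold_kernel.
Context {R : realType} {n : nat}.
Implicit Types (sx st : R) (x y u v : 'rV[R]_n).

Lemma vkernel_ge0 sx st x y u v : 0 <= vkernel sx st x y u v.
Proof. by rewrite mulr_ge0 ?expR_ge0. Qed.

Lemma vkernel_le sx st x y u v :
  vkernel sx st x y u v <= expR (- (enorm (x - y) ^+ 2 / sx ^+ 2)).
Proof.
rewrite -[leRHS]mulr1 ler_wpM2l ?expR_ge0// expRN_le1//.
by rewrite divr_ge0 ?sqr_ge0.
Qed.

Lemma vkernel_ge sx st x y u v (A B : R) : 0 < sx -> 0 < st ->
  enorm (x - y) ^+ 2 <= A * sx ^+ 2 -> enorm (u - v) ^+ 2 <= B * st ^+ 2 ->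
  expR (- A) * expR (- B) <= vkernel sx st x y u v.
Proof.
move=> sx0 st0 xyA uvB.
by rewrite ler_pM ?expR_ge0// ler_expR lerN2 ler_pdivrMr ?exprn_gt0.
Qed.

End varifold_kernel.

Definition varifold_integrand {R : realType} {n : nat} (sx st : R)
    (g : R -> 'rV[R]_n) (s t : R) : R :=
  vkernel sx st (g s) (g t) (utangent g s) (utangent g t)
  * enorm (derive1 g s) * enorm (derive1 g t).

Section varifold_integrand.
Context {R : realType} {n : nat} (g : R -> 'rV[R]_n).
Local Notation mu := (@lebesgue_measure R).
Local Notation g' := (derive1 g).
Implicit Types (sx st s t : R).

Lemma varifold_ipE sx st a b c d : varifold_ip sx st g a b c d =
  Rintegral mu `[a, b]%classic (fun s =>
    Rintegral mu `[c, d]%classic (varifold_integrand sx st g s)).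
Proof. by []. Qed.

Lemma varifold_integrand_ge0 sx st s t : 0 <= varifold_integrand sx st g s t.
Proof. by rewrite !mulr_ge0 ?vkernel_ge0 ?enorm_ge0. Qed.

Lemma varifold_ip_ge0 sx st a b c d : 0 <= varifold_ip sx st g a b c d.
Proof.
rewrite varifold_ipE; apply: Rintegral_ge0 => s _; apply: Rintegral_ge0 => t _.
exact: varifold_integrand_ge0.
Qed.

Lemma varifold_integrand_le sx st s t (K : R) :
  enorm (g' s) <= K -> enorm (g' t) <= K ->
  varifold_integrand sx st g s t <= K ^+ 2 * expR (- (enorm (g s - g t) ^+ 2 / sx ^+ 2)).
Proof.
move=> sK tK; rewrite expr2 mulrC mulrA.
have vk0 := vkernel_ge0 sx st (g s) (g t) (utangent g s) (utangent g t).
apply: (ler_pM (mulr_ge0 vk0 (enorm_ge0 _)) (enorm_ge0 _) _ tK).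
exact: (ler_pM vk0 (enorm_ge0 _) (vkernel_le _ _ _ _ _ _) sK).
Qed.

Lemma varifold_integrand_ge sx st s t (m A B : R) : 0 < sx -> 0 < st -> 0 <= m ->
  m <= enorm (g' s) -> m <= enorm (g' t) ->
  enorm (g s - g t) ^+ 2 <= A * sx ^+ 2 ->
  enorm (utangent g s - utangent g t) ^+ 2 <= B * st ^+ 2 ->
  expR (- A) * expR (- B) * m ^+ 2 <= varifold_integrand sx st g s t.
Proof.
move=> sx0 st0 m0 ms mt gA TB; rewrite expr2 mulrA.
have E0 : 0 <= expR (- A) * expR (- B) by rewrite mulr_ge0 ?expR_ge0.
apply: (ler_pM (mulr_ge0 E0 m0) m0 _ mt).
exact: (ler_pM E0 m0 (vkernel_ge sx0 st0 gA TB) ms).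
Qed.

End varifold_integrand.

Section varifold_estimates.
Context {R : realType} {n : nat} (g : R -> 'rV[R]_n) (a b c : R).
Local Notation g' := (derive1 g).
Hypothesis ab : a < b.
Hypothesis bc : b < c.
Variables (m K : R).
Hypothesis m_gt0 : 0 < m.
Hypothesis speed : forall t, a <= t <= c -> m <= enorm (g' t) <= K.

Let in_ab x : `[a, b]%classic x -> a <= x <= c.
Proof. by rewrite /= in_itv/= => /andP[-> /le_trans->//]; rewrite ltW. Qed.

Lemma varifold_integrand_le_sqr sx st s t : a <= s <= c -> a <= t <= c ->
  varifold_integrand sx st g s t <= K ^+ 2.
Proof.
move=> sac tac; have /andP[_ sK] := speed sac; have /andP[_ tK] := speed tac.
apply: le_trans (varifold_integrand_le sx st sK tK) _.
by rewrite ler_piMr ?sqr_ge0// expRN_le1// divr_ge0 ?sqr_ge0.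
Qed.

Section diagonal.
Variables (Lg LT k1 : R).
Hypothesis k1_gt0 : 0 < k1.
Hypothesis Lg_ge0 : 0 <= Lg.
Hypothesis LT_ge0 : 0 <= LT.
Hypothesis curve_lip : forall s t, a <= s <= c -> a <= t <= c ->
  enorm (g s - g t) ^+ 2 <= Lg * (s - t) ^+ 2.
Hypothesis tangent_lip : forall s t, a <= s <= c -> a <= t <= c ->
  enorm (utangent g s - utangent g t) ^+ 2 <= LT * (s - t) ^+ 2.

Lemma varifold_integrand_near_ge sx st s t : 0 < sx -> k1 * sx <= st ->
  a <= s <= c -> a <= t <= c -> `|s - t| <= sx ->
  expR (- Lg) * expR (- (LT / k1 ^+ 2)) * m ^+ 2 <= varifold_integrand sx st g s t.
Proof.
move=> sx0 k1st sac tac /ler_sqr_norm st_sx.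
have st0 : 0 < st := lt_le_trans (mulr_gt0 k1_gt0 sx0) k1st.
have /andP[ms _] := speed sac; have /andP[mt _] := speed tac.
apply: (varifold_integrand_ge sx0 st0 (ltW m_gt0) ms mt).
  by apply: le_trans (curve_lip sac tac) _; rewrite ler_wpM2l.
apply: le_trans (tangent_lip sac tac) _; rewrite -mulrA ler_wpM2l//.
rewrite ler_pdivlMl ?exprn_gt0//; apply: le_trans (ler_wpM2l (sqr_ge0 k1) st_sx) _.
by rewrite -exprMn ler_sqr_norm// ger0_norm// (mulr_ge0 (ltW k1_gt0) (ltW sx0)).
Qed.

Lemma varifold_sqnorm_ge : exists2 Q, 0 < Q &
  forall sx st, 0 < sx -> sx <= b - a -> k1 * sx <= st ->
  Q * sx <= varifold_ip sx st g a b a b.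
Proof.
pose q := expR (- Lg) * expR (- (LT / k1 ^+ 2)) * m ^+ 2.
have q0 : 0 < q by rewrite !mulr_gt0 ?expR_gt0 ?exprn_gt0.
exists (q * (b - a)) => [|sx st sx0 sxba k1st]; first by rewrite mulr_gt0 ?subr_gt0.
have inner_le s : `[a, b]%classic s -> forall t, `[a, b]%classic t ->
    0 <= varifold_integrand sx st g s t <= K ^+ 2.
  by move=> /in_ab sac t /in_ab tac; rewrite varifold_integrand_ge0 varifold_integrand_le_sqr.
rewrite varifold_ipE mulrAC.
apply: Rintegral_itv_ge (lexx a) (ltW ab) (lexx b) _ _ _ => [|s sab|s sab].
- by rewrite mulr_ge0 ?ltW.
- apply/andP; split; first by apply: Rintegral_ge0 => t /(inner_le s sab) /andP[].
  exact: Rintegral_itv_le (ltW ab) (inner_le s sab).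
have [u [au ub us su]] : exists u, [/\ a <= u, u + sx <= b, u <= s & s <= u + sx].
  move: sab; rewrite /= in_itv/= => /andP[sa sb].
  by have [sb'|bs] := leP s (b - sx); [exists s | exists (b - sx)]; split; lra.
have -> : q * sx = q * (u + sx - u) by rewrite addrC addKr.
apply: (Rintegral_itv_ge au _ ub (ltW q0) (inner_le s sab)) => [|t].
  by rewrite lerDl ltW.
rewrite /= in_itv/= => /andP[ut tu].
apply: (varifold_integrand_near_ge sx0 k1st (in_ab sab)).
  by apply: in_ab; rewrite /= in_itv/= (le_trans au ut) (le_trans tu ub).
by rewrite ler_norml; apply/andP; split; lra.
Qed.

End diagonal.

Section junction.
Variable kap : R.
Hypothesis kap_ge0 : 0 <= kap.
Hypothesis cross : forall s t, a <= s <= b -> b <= t <= c ->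
  kap * (s - t) ^+ 2 <= enorm (g s - g t) ^+ 2.

(* Off the band [t - s < eta] the Gaussian factor is at most its value at
   [t - s = eta]; on the band, [s] and [t] are within [eta] of the junction. *)
Lemma varifold_integrand_cross_le sx st eta s t : 0 < sx -> 0 <= eta ->
  a <= s <= b -> b <= t <= c ->
  varifold_integrand sx st g s t <=
    K ^+ 2 * expR (- (kap * eta ^+ 2 / sx ^+ 2))
    + K ^+ 2 * \1_(`[b - eta, b]%classic) s * \1_(`[b, b + eta]%classic) t.
Proof.
move=> sx0 eta0 sab tbc; move: (sab) (tbc) => /andP[sa sb] /andP[bt tc].
have sac : a <= s <= c by rewrite sa (le_trans sb (ltW bc)).
have tac : a <= t <= c by rewrite tc (le_trans (ltW ab) bt).
have /andP[_ sK] := speed sac; have /andP[_ tK] := speed tac.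
have K0 : 0 <= K := le_trans (enorm_ge0 _) sK.
have [eta_le|lt_eta] := leP eta (t - s).
  rewrite -[X in X <= _]addr0 lerD ?mulr_ge0 ?indicE//.
  apply: le_trans (varifold_integrand_le sx st sK tK) _.
  rewrite ler_wpM2l ?sqr_ge0// ler_expR lerN2 ler_wpM2r ?invr_ge0 ?sqr_ge0//.
  apply: le_trans (cross sab tbc); rewrite ler_wpM2l//.
  by rewrite -[(s - t) ^+ 2]sqrrN opprB ler_sqr_norm// ger0_norm.
rewrite !indicE !mem_set ?mulr1 /= ?in_itv/=; last 2 first.
- by rewrite bt; lra.
- by rewrite sb; lra.
apply: le_trans (varifold_integrand_le_sqr sx st sac tac) _.
exact: ler_wpDl (mulr_ge0 (sqr_ge0 K) (expR_ge0 _)) (lexx _).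
Qed.

Lemma varifold_cross_le sx st eta : 0 < sx -> 0 <= eta ->
  varifold_ip sx st g a b b c <=
    K ^+ 2 * (c - b) * (b - a) * expR (- (kap * eta ^+ 2 / sx ^+ 2)) + K ^+ 2 * eta ^+ 2.
Proof.
move=> sx0 eta0; set E := expR _.
have K20 : 0 <= K ^+ 2 := sqr_ge0 K.
have E0 : 0 <= E := expR_ge0 _.
have inner_le s : `[a, b]%classic s ->
    0 <= Rintegral (@lebesgue_measure R) `[b, c]%classic (varifold_integrand sx st g s)
      <= K ^+ 2 * E * (c - b) + K ^+ 2 * eta * \1_(`[b - eta, b]%classic) s.
  rewrite /= in_itv/= => sab; rewrite Rintegral_ge0 => [|t _]; last first.
    exact: varifold_integrand_ge0.
  apply: le_trans (@Rintegral_itv_le_step _ b c b (b + eta) (K ^+ 2 * E)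
    (K ^+ 2 * \1_(`[b - eta, b]%classic) s) _ (ltW bc) _ (mulr_ge0 K20 E0) _ _) _.
  - by rewrite lerDl.
  - by rewrite mulr_ge0// indicE.
  - move=> t; rewrite /= in_itv/= => tbc; rewrite varifold_integrand_ge0/=.
    exact: varifold_integrand_cross_le.
  by rewrite le_eqVlt; apply/predU1P; left; ring.
rewrite varifold_ipE.
apply: le_trans (Rintegral_itv_le_step (ltW ab) _ _ _ inner_le) _.
- by rewrite gerDl oppr_le0.
- by apply: (mulr_ge0 (mulr_ge0 K20 E0)); rewrite subr_ge0 ltW.
- exact: mulr_ge0.
by rewrite le_eqVlt; apply/predU1P; left; ring.
Qed.

End junction.

End varifold_estimates.

Lemma expRN_le_inv_sqr {R : realType} (x : R) : 0 < x -> expR (- x) <= 2 / x ^+ 2.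
Proof.
move=> x0; have x20 : 0 < x ^+ 2 / 2 by rewrite divr_gt0 ?exprn_gt0.
rewrite expRN -[2 / _]invf_div lef_pV2 ?posrE ?expR_gt0//.
by apply: le_trans (expR_ge1Dxn 1 (ltW x0)); rewrite lerDr.
Qed.

Lemma gaussian_tail_le {R : realType} (C D kap eps : R) :
  0 < C -> 0 < D -> 0 < kap -> 0 < eps ->
  exists2 delta, 0 < delta & forall sx, 0 < sx -> sx < delta ->
  exists2 eta, 0 <= eta &
    C * expR (- (kap * eta ^+ 2 / sx ^+ 2)) + D * eta ^+ 2 <= eps * sx.
Proof.
move=> C0 D0 kap0 eps0.
(* [eta ^+ 2 = A * sx] makes the second summand [eps * sx / 2]. *)
pose A := eps / (2 * D); have A0 : 0 < A by rewrite divr_gt0 ?mulr_gt0.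
pose B := kap * A; have B0 : 0 < B by rewrite mulr_gt0.
exists (eps * B ^+ 2 / (4 * C)) => [|sx sx0 sx_lt].
  by apply: divr_gt0; apply: mulr_gt0 => //; exact: exprn_gt0.
exists (Num.sqrt (A * sx)); first exact: sqrtr_ge0.
rewrite sqr_sqrtr; last exact: mulr_ge0 (ltW A0) (ltW sx0).
have -> : kap * (A * sx) / sx ^+ 2 = B / sx by rewrite /B; field; rewrite gt_eqF.
have -> : D * (A * sx) = eps * sx / 2 by rewrite /A; field; rewrite gt_eqF.
suff tail : C * expR (- (B / sx)) <= eps * sx / 2.
  by apply: le_trans (lerD tail (lexx _)) _; rewrite le_eqVlt; apply/predU1P; left; field.
apply: le_trans (ler_wpM2l (ltW C0) (expRN_le_inv_sqr (divr_gt0 B0 sx0))) _.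
have -> : C * (2 / (B / sx) ^+ 2) = 4 * C / B ^+ 2 * sx * (sx / 2).
  by field; rewrite !gt_eqF.
rewrite -[eps * sx / 2]mulrA; apply: ler_wpM2r; first exact: divr_ge0 (ltW sx0) (ler0n _ 2).
rewrite mulrC -ler_pdivlMr; last by apply: divr_gt0; [exact: mulr_gt0 | exact: exprn_gt0].
by rewrite invf_div mulrA; exact: ltW.
Qed.

Theorem lemma1 (R : realType) (n : nat) (g : R -> 'rV[R]_n) (a b c : R)
    (xi xj xk : 'rV[R]_n) :
  a < b -> b < c ->
  smooth_curve g ->
  (forall s, a <= s <= c -> derive1 g s != 0) ->
  (forall s t, a <= s <= c -> a <= t <= c -> g s = g t -> s = t) ->
  g a = xi -> g b = xj -> g c = xk ->
  (* Assumption A1 *)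
  (forall s s' t t', a <= s <= b -> a <= s' <= b -> b <= t <= c -> b <= t' <= c ->
     arclen g s t <= arclen g s' t' ->
     enorm (g s - g t) <= enorm (g s' - g t')) ->
  forall k1 k2 : R, 0 < k1 -> 0 < k2 ->
  forall eps : R, 0 < eps ->
  exists delta : R, 0 < delta /\
    forall sx st : R, 0 < sx -> sx < delta -> 0 < st -> st < delta ->
      k1 * sx <= st <= k2 * sx ->
      `| varifold_ip sx st g a b b c |
        <= eps * (varifold_ip sx st g a b a b + varifold_ip sx st g b c b c).
Proof.
move=> ab bc g_smooth g_regular g_inj _ _ _ A1 k1 k2 k10 _ eps eps0.
have ac : a <= c by rewrite ltW ?(lt_trans ab bc).
have [m [K [m0 speed]]] := speed_bounds ac g_smooth g_regular.
have [Lg Lg0 curve_lip] := curve_lipschitz ac g_smooth.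
have [LT LT0 tangent_lip] := utangent_lipschitz ac g_smooth g_regular.
have [kap kap0 cross] := junction_sqr_enorm_sub_ge ab bc g_smooth g_regular g_inj A1.
have [Q Q0 sqnorm_ge] := varifold_sqnorm_ge ab bc m0 speed k10 Lg0 LT0 curve_lip tangent_lip.
have /andP[ma aK] : m <= enorm (derive1 g a) <= K by apply: speed; rewrite lexx.
have K0 : 0 < K := lt_le_trans m0 (le_trans ma aK).
have C0 : 0 < K ^+ 2 * (c - b) * (b - a) by rewrite !mulr_gt0 ?exprn_gt0 ?subr_gt0.
have [delta delta0 tail] :=
  gaussian_tail_le C0 (exprn_gt0 2 K0) kap0 (mulr_gt0 eps0 Q0).
exists (Num.min (b - a) delta); split; first by rewrite lt_min subr_gt0 ab.
move=> sx st sx0; rewrite lt_min => /andP[/ltW sxba sxd] _ _ /andP[k1st _].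
have [eta eta0 tail_le] := tail sx sx0 sxd.
rewrite ger0_norm ?varifold_ip_ge0//.
apply: le_trans (varifold_cross_le ab bc speed (ltW kap0) cross st sx0 eta0) _.
apply: le_trans tail_le _; rewrite -mulrA (ler_wpM2l (ltW eps0))//.
apply: le_trans (sqnorm_ge sx st sx0 sxba k1st) _.
by rewrite lerDl varifold_ip_ge0.
Qed.
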